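(* Let $S:\mathbb{R}^d\times\mathbb{R}^k\to\mathbb{R}$ be a locally Lipschitz generating family for $L\subset T^*\mathbb{R}^d$, and let $\Phi(x,\eta')=(x,\phi(x,\eta'))$ be a $C^1$ fiberwise diffeomorphism of $\mathbb{R}^d\times\mathbb{R}^k$ (i.e. a $C^1$ diffeomorphism such that each $\eta'\mapsto\phi(x,\eta')$ is a diffeomorphism of $\mathbb{R}^k$). Then $S':=S\circ\Phi$ is also a generating family for $L$.
   Context: A locally Lipschitz family $S:\mathbb{R}^d\times\mathbb{R}^k\to\mathbb{R}$ is called a generating family for $L\subset T^*\mathbb{R}^d$ when $L=\{(x,y)\in T^*\mathbb{R}^d:\exists\eta\in\mathbb{R}^k,\ (y,0)\in\partial S(x,\eta)\}$, where $\partial S$ is Clarke's generalized derivative of $S$ as a function on $\mathbb{R}^d\times\mathbb{R}^k$: for a locally Lipschitz $f$ on $\mathbb{R}^m$, $\partial f(a)$ is the convex hull of the set of limits of $df(x_n)$ over sequences $x_n\to a$ of points where $f$ is differentiable. *)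

From HB Require Import structures.
From mathcomp Require Import all_boot all_order all_algebra.
From mathcomp Require Import all_classical all_reals all_analysis.
Set Implicit Arguments. Unset Strict Implicit. Unset Printing Implicit Defensive.
Import Order.TTheory GRing.Theory Num.Theory.
Import numFieldNormedType.Exports.
Local Open Scope classical_set_scope.
Local Open Scope ring_scope.

Section Defs.
Variable R : realType.

Definition dotv (n : nat) (u v : 'rV[R]_n) : R := \sum_(i < n) u 0 i * v 0 i.

(* R^d x R^k is modelled as 'rV_d * 'rV_k; a covector on it is a pair (p,q),
   acting by (u,v) |-> p.u + q.v *)
Definition covec (d k : nat) (c : 'rV[R]_d * 'rV[R]_k) (h : 'rV[R]_d * 'rV[R]_k) : R :=
  dotv c.1 h.1 + dotv c.2 h.2.

Definition locally_lipschitz (V : normedModType R) (f : V -> R) : Prop :=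
  forall a : V, exists r : R, 0 < r /\ exists K : R,
    forall x y, ball a r x -> ball a r y -> `|f x - f y| <= K * `|x - y|.

Definition conv_hull (V : lmodType R) (A : set V) : set V :=
  [set z | exists n (w : 'I_n -> R) (p : 'I_n -> V),
     [/\ forall i, 0 <= w i, \sum_(i < n) w i = 1, forall i, A (p i)
       & z = \sum_(i < n) w i *: p i]].

Definition reachable_grad (d k : nat) (S : 'rV[R]_d * 'rV[R]_k -> R)
  (a : 'rV[R]_d * 'rV[R]_k) : set ('rV[R]_d * 'rV[R]_k) :=
  [set c | exists (an : nat -> 'rV[R]_d * 'rV[R]_k)
                  (cn : nat -> 'rV[R]_d * 'rV[R]_k),
     [/\ an n @[n --> \oo] --> a,
         forall n, differentiable S (an n),
         forall n h, 'd S (an n) h = covec (cn n) h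
       & cn n @[n --> \oo] --> c]].

Definition clarke (d k : nat) (S : 'rV[R]_d * 'rV[R]_k -> R)
  (a : 'rV[R]_d * 'rV[R]_k) : set ('rV[R]_d * 'rV[R]_k) :=
  conv_hull (reachable_grad S a).

Definition generating_family (d k : nat) (S : 'rV[R]_d * 'rV[R]_k -> R)
  (L : set ('rV[R]_d * 'rV[R]_d)) : Prop :=
  locally_lipschitz S /\
  L = [set xy | exists eta : 'rV[R]_k, clarke S (xy.1, eta) (xy.2, 0)].

(* C^1 map between normed spaces: differentiable everywhere, with
   derivative continuous (tested on each direction; finite dimensions) *)
Definition C1 (V W : normedModType R) (f : V -> W) : Prop :=
  (forall x, differentiable f x) /\ (forall h : V, continuous (fun x => 'd f x h)).

Definition C1_diffeo (V : normedModType R) (f : V -> V) : Prop :=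
  exists g : V -> V, [/\ cancel f g, cancel g f, C1 f & C1 g].

End Defs.

From HB Require Import structures.
From mathcomp Require Import all_boot all_order all_algebra.
From mathcomp Require Import all_classical all_reals all_analysis.
Import Order.TTheory GRing.Theory Num.Theory.
Import numFieldNormedType.Exports.
Local Open Scope classical_set_scope.
Local Open Scope ring_scope.

Set Implicit Arguments.
Unset Strict Implicit.
Unset Printing Implicit Defensive.

(* Write T (x, eta) = (x, phi x eta) and G for its inverse.  A C^1 map is locally
   Lipschitz (mean value theorem on segments of a small ball, where dT is bounded),
   so S \o T is locally Lipschitz.  Points of differentiability of S \o T and of S
   correspond under T, and the chain rule carries limits of gradients, hence their
   convex hulls: every c in the Clarke derivative of S \o T at a is e \o dT(a) for
   some e in the Clarke derivative of S at T a.  Since dT(a) is onto and preserves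
   the first component, c = (y, 0) forces e = (y, 0); applying this to T and to G
   shows that both families cut out the same L. *)

Section Dot.
Variables (R : realType) (n : nat).
Implicit Types u v : 'rV[R]_n.

Lemma dotvC u v : dotv u v = dotv v u.
Proof. by apply: eq_bigr => i _; rewrite mulrC. Qed.

Lemma dotv_is_linear u : linear (dotv u).
Proof.
move=> a v w; rewrite /dotv scaler_sumr -big_split.
by apply: eq_bigr => i _; rewrite !mxE mulrDr mulrCA.
Qed.

HB.instance Definition _ u :=
  GRing.isLinear.Build R 'rV[R]_n R _ (dotv u) (dotv_is_linear u).

Lemma dotv_delta u i : dotv u (delta_mx 0 i) = u 0 i.
Proof.
rewrite /dotv (bigD1 i) //= big1 ?addr0; first by rewrite mxE !eqxx mulr1.
by move=> j ji; rewrite mxE (negbTE ji) andbF mulr0.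
Qed.

End Dot.

Section Covectors.
Variables (R : realType) (d k : nat).
Local Notation V := ('rV[R]_d * 'rV[R]_k)%type.
Implicit Types c h z : V.

Lemma covec_is_linear c : linear (covec c).
Proof. by move=> a u v; rewrite /covec /= !linearP scalerDr addrACA. Qed.

HB.instance Definition _ c :=
  GRing.isLinear.Build R V R _ (covec c) (covec_is_linear c).

Lemma covecC c h : covec c h = covec h c.
Proof. by rewrite /covec dotvC [dotv c.2 _]dotvC. Qed.

Lemma covec_pair0 (y : 'rV[R]_d) h : covec (y, 0) h = dotv y h.1.
Proof. by rewrite /covec /= [dotv 0 _]dotvC linear0 addr0. Qed.

Definition E1 (i : 'I_d) : V := (delta_mx 0 i, 0).
Definition E2 (j : 'I_k) : V := (0, delta_mx 0 j).

Lemma covecE1 z i : covec z (E1 i) = z.1 0 i.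
Proof. by rewrite /covec /= dotv_delta linear0 addr0. Qed.

Lemma covecE2 z j : covec z (E2 j) = z.2 0 j.
Proof. by rewrite /covec /= dotv_delta linear0 add0r. Qed.

Lemma pair_basis_sum h :
  h = \sum_i h.1 0 i *: E1 i + \sum_j h.2 0 j *: E2 j.
Proof.
case: h => u v; congr pair; rewrite /= ?(raddf_sum fst) ?(raddf_sum snd) /=.
  by rewrite [X in _ + X]big1 ?addr0 -?row_sum_delta // => j _; rewrite scaler0.
by rewrite [X in X + _]big1 ?add0r -?row_sum_delta // => i _; rewrite scaler0.
Qed.

Definition covec_of (l : V -> R) : V :=
  \sum_i l (E1 i) *: E1 i + \sum_j l (E2 j) *: E2 j.

Lemma covec_ofE (l : {linear V -> R}) h : covec (covec_of l) h = l h.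
Proof.
rewrite [in RHS](pair_basis_sum h) covecC /covec_of !linearD !linear_sum /=.
by congr (_ + _); apply: eq_bigr => i _; rewrite !linearZ /= (covecE1, covecE2); apply: mulrC.
Qed.

Lemma covec_ofK z : covec_of (covec z) = z.
Proof.
rewrite [RHS]pair_basis_sum; congr (_ + _); apply: eq_bigr => i _.
  by rewrite covecE1.
by rewrite covecE2.
Qed.

Lemma covec_inj z z' : covec z =1 covec z' -> z = z'.
Proof. by move=> /funext e; rewrite -[z]covec_ofK e covec_ofK. Qed.

Definition adjoint (D : V -> V) c : V := covec_of (covec c \o D).

Lemma adjointE (D : {linear V -> V}) c h : covec (adjoint D c) h = covec c (D h).
Proof. exact: (covec_ofE (covec c \o D)). Qed.

End Covectors.

Arguments E1 {R d k} i.
Arguments E2 {R d k} j.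

Lemma fst_continuous (U W : topologicalType) : continuous (@fst U W).
Proof. by move=> [x y]; exact: cvg_fst. Qed.

Lemma snd_continuous (U W : topologicalType) : continuous (@snd U W).
Proof. by move=> [x y]; exact: cvg_snd. Qed.

Section CovecLimits.
Variables (R : realType) (d k : nat).
Local Notation V := ('rV[R]_d * 'rV[R]_k)%type.
Variables (T : Type) (F : set_system T).
Context {FF : Filter F}.

Lemma covec_cvg (u w : T -> V) (u0 w0 : V) :
  u t @[t --> F] --> u0 -> w t @[t --> F] --> w0 ->
  covec (u t) (w t) @[t --> F] --> covec u0 w0.
Proof.
have cvg_entry m (p : V -> 'rV[R]_m) (s : T -> V) s0 i :
    continuous p -> s t @[t --> F] --> s0 -> (p (s t)) 0 i @[t --> F] --> p s0 0 i.
  move=> pc ss0; have ps : p (s t) @[t --> F] --> p s0 := cvg_comp _ _ ss0 (pc s0).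
  exact: cvg_comp _ _ ps (@coord_continuous R 1 m 0 i (p s0)).
move=> uu0 ww0; apply: cvgD; apply: cvg_big => [|i _]; do ?exact: add_continuous.
  by apply: cvgM; apply: (cvg_entry _ fst) => //; exact: fst_continuous.
by apply: cvgM; apply: (cvg_entry _ snd) => //; exact: snd_continuous.
Qed.

Lemma adjoint_cvg (D : T -> V -> V) (D0 : V -> V) (c : T -> V) (c0 : V) :
  (forall h, D t h @[t --> F] --> D0 h) -> c t @[t --> F] --> c0 ->
  adjoint (D t) (c t) @[t --> F] --> adjoint D0 c0.
Proof.
move=> DD0 cc0; rewrite /adjoint /covec_of.
apply: cvgD; apply: cvg_big => [|i _]; do ?exact: add_continuous;
  by apply: cvgZ; [exact: covec_cvg | exact: cvg_cst].
Qed.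

End CovecLimits.

Lemma covec_continuous (R : realType) (d k : nat) (c : 'rV[R]_d * 'rV[R]_k) :
  continuous (covec c).
Proof.
by move=> p; exact: (@covec_cvg _ _ _ _ (nbhs p) _ (cst c) id c p (cvg_cst c) cvg_id).
Qed.

Arguments covec_continuous {R d k} c.

Section Differentials.
Variable R : realType.

Lemma diff_cancel (U W : normedModType R) (f : U -> W) (g : W -> U) x h :
  cancel f g -> differentiable f x -> differentiable g (f x) ->
  'd g (f x) ('d f x h) = h.
Proof.
move=> fK df dg; have /(congr1 (fun D => D h)) /= <- := diff_comp df dg.
have -> : g \o f = idfun by apply/funext => y /=; rewrite fK.
by rewrite (@diff_lin R _ _ idfun) // => y; exact: cvg_id.
Qed.

Lemma diff_linear_comp (U W W' : normedModType R) (l : {linear W -> W'})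
    (f : U -> W) x h :
  continuous l -> differentiable f x -> 'd (l \o f) x h = l ('d f x h).
Proof.
move=> lc df; rewrite diff_comp //; last exact: linear_differentiable.
by rewrite /= diff_lin.
Qed.

Lemma diff_fst_id (U W : normedModType R) (f : U * W -> U * W) x h :
  (forall p, (f p).1 = p.1) -> differentiable f x -> ('d f x h).1 = h.1.
Proof.
move=> f1 df; have /= <- := diff_linear_comp h (@fst_continuous U W) df.
have -> : fst \o f = fst by apply/funext => p /=; rewrite f1.
by rewrite diff_lin //; exact: fst_continuous.
Qed.

End Differentials.

Section Segments.
Variables (R : realType) (W : normedModType R).

Lemma ball_convex (a x y : W) (r t : R) :
  ball a r x -> ball a r y -> 0 <= t <= 1 -> ball a r (y + t *: (x - y)).
Proof.
rewrite -!ball_normE /= => ax ay /andP[t0 t1].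
have cvx : (1 - t) *: (a - y) + t *: (a - x) = a - y + t *: (y - x).
  rewrite scalerBl scale1r -addrA; congr (_ + _).
  by rewrite -scalerN -scalerDr opprB addrA subrK.
rewrite opprD addrA -scalerN opprB -cvx.
set m := Num.max `|a - x| `|a - y|.
have : m < r by rewrite gt_max ax ay.
apply: le_lt_trans; apply: (le_trans (ler_normD _ _)).
rewrite !normrZ !ger0_norm ?subr_ge0 //.
apply: (@le_trans _ _ ((1 - t) * m + t * m)); last by rewrite -mulrDl subrK mul1r.
by apply: lerD; apply: ler_wpM2l; rewrite ?subr_ge0 // le_max lexx ?orbT.
Qed.

Lemma ler_dist_segment (g : W -> R) (x y : W) (C : R) :
  (forall z, differentiable g z) ->
  (forall t, 0 <= t <= 1 -> `|'d g (y + t *: (x - y)) (x - y)| <= C * `|x - y|) ->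
  `|g x - g y| <= C * `|x - y|.
Proof.
move=> dg gC; set v := x - y.
pose l : R -> W := cst y + ( *:%R ^~ v).
have lE t : l t = y + t *: v by [].
have ldiff t : is_diff t l (0 + ( *:%R ^~ v)) by exact: is_diffD.
have dl t : differentiable l t by have [] := ldiff t.
have dlE t : 'd l t 1 = v by have [_ ->] := ldiff t; rewrite /= add0r scale1r.
have gl t : is_derive t (1 : R) (g \o l) ('d g (l t) v).
  apply: DeriveDef; first exact/diff_derivable/differentiable_comp.
  rewrite deriveE; last exact: differentiable_comp.
  by rewrite diff_comp //= dlE.
have glc : {within `[0, 1], continuous (g \o l)}.
  apply: continuous_subspaceT => t.
  exact/differentiable_continuous/differentiable_comp.
have [t /[!in_itv] /= t01 glt] := MVT_segment ler01 (fun t _ => gl t) glc.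
have -> : g x - g y = (g \o l) 1 - (g \o l) 0.
  by rewrite /= !lE scale1r scale0r addr0 /v (addrC y) subrK.
by rewrite glt subr0 mulr1; exact: gC.
Qed.

End Segments.

Section LocalLipschitz.
Variables (R : realType) (d k : nat).
Local Notation V := ('rV[R]_d * 'rV[R]_k)%type.

Lemma mx_entry_norm_le m n (u : 'M[R]_(m, n)) i j : `|u i j| <= `|u|.
Proof.
have -> : `|u| = mx_norm u by []; rewrite mx_normrE.
exact: (le_bigmax _ (fun ij : 'I_m * 'I_n => `|u ij.1 ij.2|) (i, j)).
Qed.

Lemma mx_norm_le m n (u : 'M[R]_(m, n)) M :
  0 <= M -> (forall i j, `|u i j| <= M) -> `|u| <= M.
Proof.
move=> M0 uM; have -> : `|u| = mx_norm u by []; rewrite mx_normrE.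
by apply: bigmax_le => // -[i j] _; exact: uM.
Qed.

Lemma norm_fst_entry_le (w : V) i : `|w.1 0 i| <= `|w|.
Proof. by rewrite prod_normE le_max mx_entry_norm_le. Qed.

Lemma norm_snd_entry_le (w : V) j : `|w.2 0 j| <= `|w|.
Proof. by rewrite prod_normE le_max mx_entry_norm_le orbT. Qed.

Lemma pair_norm_le (w : V) M : 0 <= M ->
  (forall i, `|w.1 0 i| <= M) -> (forall j, `|w.2 0 j| <= M) -> `|w| <= M.
Proof.
move=> M0 w1M w2M; rewrite prod_normE ge_max.
by apply/andP; split; apply: mx_norm_le => // i j; rewrite (ord1 i).
Qed.

Lemma linear_norm_le (W : normedModType R) (D : {linear V -> W}) h :
  `|D h| <= (\sum_i `|D (E1 i)| + \sum_j `|D (E2 j)|) * `|h|.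
Proof.
rewrite [in D h](pair_basis_sum h) linearD !linear_sum mulrDl.
apply: (le_trans (ler_normD _ _)); apply: lerD;
  apply: (le_trans (ler_norm_sum _ _ _)); rewrite mulr_suml; apply: ler_sum => i _;
  rewrite linearZ normrZ mulrC ler_wpM2l //.
  exact: norm_fst_entry_le.
exact: norm_snd_entry_le.
Qed.

Lemma C1_diff_bounded_near (W : normedModType R) (T : V -> W) (a : V) : C1 T ->
  exists2 C, 0 <= C & \forall z \near a, forall h, `|'d T z h| <= C * `|h|.
Proof.
move=> [_ cT].
have near_le h : \forall z \near a, `|'d T z h| <= `|'d T a h| + 1.
  have /cvgrPdist_lt near1 := cT h a.
  apply: filterS (near1 _ ltr01) => z /ltW; rewrite distrC => dz1.
  by rewrite -lerBlDl; exact: le_trans (lerB_dist _ _) dz1.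
exists (\sum_i (`|'d T a (E1 i)| + 1) + \sum_j (`|'d T a (E2 j)| + 1)).
  by apply: addr_ge0; apply: sumr_ge0 => *; exact: addr_ge0.
have near1 : \forall z \near a, forall i, `|'d T z (E1 i)| <= `|'d T a (E1 i)| + 1.
  exact: (@filter_forall V 'I_d _ (nbhs a) _ (fun i => near_le (E1 i))).
have near2 : \forall z \near a, forall j, `|'d T z (E2 j)| <= `|'d T a (E2 j)| + 1.
  exact: (@filter_forall V 'I_k _ (nbhs a) _ (fun j => near_le (E2 j))).
apply: filterS2 near1 near2 => z le1 le2 h; apply: (le_trans (linear_norm_le _ h)).
by rewrite ler_wpM2r //; apply: lerD; apply: ler_sum.
Qed.

Lemma C1_lipschitz_near (T : V -> V) (a : V) : C1 T -> exists C r, 0 < r /\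
  forall x y, ball a r x -> ball a r y -> `|T x - T y| <= C * `|x - y|.
Proof.
move=> CT; have [C C0 /nbhs_ballP[r /= r0 Cr]] := C1_diff_bounded_near a CT.
exists C, r; split=> // x y ax ay.
have coord c : (forall w, `|covec c w| <= `|w|) ->
    `|covec (T x - T y) c| <= C * `|x - y|.
  move=> cw; rewrite covecC linearB /=.
  apply: (ler_dist_segment (g := covec c \o T)) => [z|t t01].
    apply: differentiable_comp; first exact: CT.1.
    exact: (@linear_differentiable R V R (covec c) _ (covec_continuous c)).
  rewrite diff_linear_comp; last exact: CT.1; last exact: covec_continuous.
  by apply: le_trans (cw _) _; apply: Cr; exact: ball_convex.
apply: pair_norm_le => [|i|j]; first exact: mulr_ge0.
  by rewrite -covecE1 coord // => w; rewrite covecC covecE1 norm_fst_entry_le.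
by rewrite -covecE2 coord // => w; rewrite covecC covecE2 norm_snd_entry_le.
Qed.

Lemma locally_lipschitz_comp (S : V -> R) (T : V -> V) :
  locally_lipschitz S -> C1 T -> locally_lipschitz (S \o T).
Proof.
move=> Slip CT a; have [r [r0 [K SK]]] := Slip (T a).
have [C [r1 [r10 TC]]] := C1_lipschitz_near a CT.
have /nbhs_ballP[r2 /= r20 Tr2] : nbhs a (T @^-1` ball (T a) r).
  exact: (differentiable_continuous (CT.1 a)) _ (nbhsx_ballx _ _ r0).
exists (Num.min r1 r2); split; first by rewrite lt_min r10 r20.
exists (Num.max K 0 * C) => x y ax ay.
have [ax1 ax2] : ball a r1 x /\ ball a r2 x.
  by split; apply: le_ball ax; rewrite ge_min lexx ?orbT.
have [ay1 ay2] : ball a r1 y /\ ball a r2 y.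
  by split; apply: le_ball ay; rewrite ge_min lexx ?orbT.
apply: (le_trans (SK _ _ (Tr2 _ ax2) (Tr2 _ ay2))).
apply: (@le_trans _ _ (Num.max K 0 * `|T x - T y|)).
  by rewrite ler_wpM2r // le_max lexx.
by rewrite -mulrA ler_wpM2l ?le_max ?lexx ?orbT //; exact: TC.
Qed.

End LocalLipschitz.

Section ClarkeComp.
Variables (R : realType) (d k : nat).
Local Notation V := ('rV[R]_d * 'rV[R]_k)%type.
Variables (T G : V -> V) (F : V -> R).
Hypotheses (TK : cancel T G) (GK : cancel G T) (CT : C1 T) (CG : C1 G).

Lemma reachable_grad_comp a c : reachable_grad (F \o T) a c ->
  exists2 e, reachable_grad F (T a) e & forall h, covec c h = covec e ('d T a h).
Proof.
case: CT CG => dT _ [dG cG] [an [cn [ana dFT dFTE cnc]]].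
have FE : F = (F \o T) \o G by apply/funext => y /=; rewrite GK.
have dFTG n : differentiable (F \o T) (G (T (an n))) by rewrite TK.
have dF n : differentiable F (T (an n)) by rewrite FE; exact: differentiable_comp.
have dFE n h : 'd F (T (an n)) h = covec (cn n) ('d G (T (an n)) h).
  by rewrite {1}FE diff_comp //= TK dFTE.
have Tana : T (an n) @[n --> \oo] --> T a.
  exact: cvg_comp _ _ ana (differentiable_continuous (dT a)).
exists (adjoint ('d G (T a)) c); last by move=> h; rewrite adjointE diff_cancel.
exists (fun n => T (an n)), (fun n => adjoint ('d G (T (an n))) (cn n)).
split=> // [n h|]; first by rewrite adjointE dFE.
by apply: adjoint_cvg => // h; exact: cvg_comp _ _ Tana (cG h (T a)).
Qed.

Lemma clarke_comp a c : clarke (F \o T) a c ->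
  exists2 e, clarke F (T a) e & forall h, covec c h = covec e ('d T a h).
Proof.
case=> n [w [p [w0 w1 pR ->]]].
have /choice [e He] i : exists e, reachable_grad F (T a) e /\
    forall h, covec (p i) h = covec e ('d T a h).
  by have [e ? ?] := reachable_grad_comp (pR i); exists e.
exists (\sum_i w i *: e i); first by exists n, w, e; split=> // i; case: (He i).
move=> h; rewrite covecC [RHS]covecC !linear_sum; apply: eq_bigr => i _.
by rewrite !linearZ /= covecC [covec ('d T a h) _]covecC; case: (He i) => _ ->.
Qed.

Hypothesis T1 : forall p, (T p).1 = p.1.

Lemma clarke_comp_fiber a (y : 'rV[R]_d) :
  clarke (F \o T) a (y, 0) -> clarke F (T a) (y, 0).
Proof.
case/clarke_comp => e eF ecov; suff -> : (y, 0) = e by [].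
apply: covec_inj => h'; set h := 'd G (T a) h'.
have Th : 'd T a h = h'.
  by have := diff_cancel h' GK (CG.1 (T a)); rewrite TK; apply; exact: CT.1.
by rewrite -Th covec_pair0 diff_fst_id //; [rewrite -covec_pair0 ecov | exact: CT.1].
Qed.

End ClarkeComp.

Theorem lemma2p20 (R : realType) (d k : nat)
  (S : 'rV[R]_d * 'rV[R]_k -> R) (L : set ('rV[R]_d * 'rV[R]_d))
  (phi : 'rV[R]_d -> 'rV[R]_k -> 'rV[R]_k) :
  generating_family S L ->
  C1_diffeo (fun p : 'rV[R]_d * 'rV[R]_k => (p.1, phi p.1 p.2)) ->
  (forall x : 'rV[R]_d, C1_diffeo (phi x)) ->
  generating_family (fun p : 'rV[R]_d * 'rV[R]_k => S (p.1, phi p.1 p.2)) L.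
Proof.
set T := fun p : 'rV[R]_d * 'rV[R]_k => (p.1, phi p.1 p.2).
move=> [Slip ->] [G [TK GK CT CG]] _.
have G1 p : (G p).1 = p.1 by rewrite -[in RHS](GK p).
split; first exact: (locally_lipschitz_comp Slip CT).
apply/seteqP; split=> -[x y] /= [eta].
- move=> Sxy; have STxy : clarke (S \o T) (G (x, eta)) (y, 0).
    apply: (clarke_comp_fiber GK TK CG CT G1).
    by have -> : (S \o T) \o G = S by apply/funext => p /=; rewrite GK.
  exists (G (x, eta)).2.
  by have -> : (x, (G (x, eta)).2) = G (x, eta) by rewrite [RHS]surjective_pairing G1.
- by move/(clarke_comp_fiber TK GK CT CG (fun p => erefl)); exists (phi x eta).
Qed.
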